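(* Let $\Phi:\ell^\infty(\mathbb Z)\to\ell^\infty(\mathbb Z)$ be a bounded linear map commuting with the backward shift $B$, $(Bv)_n=v_{n+1}$, and let $\mathcal I$ be the identity map. If $\Phi$ is idempotent, then either $\Phi=\Phi^{s}$ (i.e. $\Phi$ is singular), or $\Phi=\mathcal I-\Psi$ where $\Psi$ is a singular, idempotent linear map commuting with $B$.
   Context: For such $\Phi$, let $\phi_0(v)=\Phi(v)_0$, so $\Phi(v)_n=\phi_0(B^nv)$. Write $\phi_0=\phi^{ac}+\phi^s$ with $\phi^{ac}$ weak*-continuous (given by an $\ell^1(\mathbb Z)$ vector) and $\phi^s$ vanishing on $c_0(\mathbb Z)$ (the null sequences), and set $\Phi^{ac}(v)=(\phi^{ac}(B^nv))_n$, $\Phi^s(v)=(\phi^s(B^nv))_n$. A linear map on $\ell^\infty(\mathbb Z)$ is called singular if it annihilates $c_0(\mathbb Z)$. *)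

From mathcomp Require Import all_boot all_order all_algebra.
From mathcomp Require Import reals.
Set Implicit Arguments. Unset Strict Implicit. Unset Printing Implicit Defensive.
Import Order.TTheory GRing.Theory Num.Theory.
Local Open Scope ring_scope.

Definition linf {R : realType} (v : int -> R) : Prop :=
  exists M : R, forall n : int, `|v n| <= M.

Definition c0 {R : realType} (v : int -> R) : Prop :=
  forall e : R, 0 < e -> exists N : nat, forall n : int, (N <= `|n|)%N -> `|v n| <= e.

Definition bshift {R : realType} (v : int -> R) : int -> R := fun n => v (n + 1).

(* A (possibly unbounded) linear map on l^infty(Z), represented by a function
   on all sequences of which only the restriction to l^infty(Z) matters. *)
Definition linf_linear_map {R : realType} (Phi : (int -> R) -> (int -> R)) : Prop :=
  (forall v, linf v -> linf (Phi v)) /\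
  (forall (a : R) v w, linf v -> linf w ->
     Phi (fun n => a * v n + w n) = (fun n => a * Phi v n + Phi w n)).

Definition linf_bounded_map {R : realType} (Phi : (int -> R) -> (int -> R)) : Prop :=
  linf_linear_map Phi /\
  exists C : R, forall (v : int -> R) (M : R),
    (forall n, `|v n| <= M) -> forall n, `|Phi v n| <= C * M.

Definition commutes_with_B {R : realType} (Phi : (int -> R) -> (int -> R)) : Prop :=
  forall v, linf v -> Phi (bshift v) = bshift (Phi v).

Definition idempotent_map {R : realType} (Phi : (int -> R) -> (int -> R)) : Prop :=
  forall v, linf v -> Phi (Phi v) = Phi v.

Definition singular_map {R : realType} (Phi : (int -> R) -> (int -> R)) : Prop :=
  forall v, linf v -> c0 v -> Phi v = (fun _ => 0).

(* Let a := Phi (dirac 0) be the impulse response of Phi.  Shift invariance gives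
   Phi (dirac j) = a (. - j), so on finitely supported sequences Phi is convolution
   with a, and boundedness puts a in l^1.  The tent window of width L is
   1/L-Lipschitz, so the finitely supported sequences tent_L(m) e^{imt} are
   approximate eigenvectors of that convolution, with eigenvalue the Fourier
   transform z(t) of a; idempotence of Phi then forces z(t)^2 = z(t).  Hence z
   takes only the values 0 and 1, is constant by continuity, and Fourier
   inversion gives a = 0 or a = dirac 0.  Everything is done with partial Fourier
   sums of a, cos and sin instead of e^{imt}, and explicit error bounds.  Finally,
   Phi restricted to c_0 is 0 or the identity, and in the second case
   Psi := I - Phi is the required singular idempotent. *)

From mathcomp Require Import all_boot all_order all_algebra.
From mathcomp Require Import reals.
From mathcomp Require Import boolp classical_sets topology normedtype trigo.
From mathcomp Require Import ring lra zify.
Import Order.TTheory GRing.Theory Num.Theory.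
Import numFieldNormedType.Exports.
Local Open Scope ring_scope.
Set Implicit Arguments. Unset Strict Implicit. Unset Printing Implicit Defensive.

Definition window (L : nat) : seq int := [seq i%:Z - L%:Z | i <- iota 0 (2 * L + 1)].

Lemma window_uniq L : uniq (window L).
Proof.
rewrite map_inj_uniq ?iota_uniq // => x y /eqP.
by rewrite subr_eq subrK => /eqP [].
Qed.

Lemma mem_window L k : (k \in window L) = (`|k| <= L)%N.
Proof.
apply/mapP/idP => [[i]|kL]; first by rewrite mem_iota => iL ->; lia.
by exists (absz (k + L%:Z)); [rewrite mem_iota|]; lia.
Qed.

Lemma big_uniq_eq_supp (R : nmodType) (I : eqType) (s t : seq I) (F : I -> R) :
  uniq s -> uniq t -> (forall x, F x != 0 -> x \in s /\ x \in t) ->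
  \sum_(x <- s) F x = \sum_(x <- t) F x.
Proof.
move=> us ut st; apply: perm_big_supp; apply: uniq_perm; rewrite ?filter_uniq //.
by move=> x; rewrite !mem_filter; case: (eqVneq (F x) 0) => //= /st [-> ->].
Qed.

Section Tent.
Context {R : realType}.

Definition tent (L : nat) (n : int) : R :=
  if (`|n| <= L)%N then 1 - (absz n)%:R / L%:R else 0.

Lemma tent0 L : tent L 0 = 1.
Proof. by rewrite /tent /= mul0r subr0. Qed.

Lemma tent_notin_window L n : n \notin window L -> tent L n = 0.
Proof. by rewrite mem_window /tent => /negbTE ->. Qed.

Lemma norm_tent_le1 L n : (0 < L)%N -> `|tent L n| <= 1.
Proof.
move=> L_gt0; rewrite /tent; case: ifP => nL; last by rewrite normr0.
have Lpos : (0 : R) < L%:R by rewrite ltr0n.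
have le1 : (absz n)%:R / L%:R <= (1 : R) by rewrite ler_pdivrMr // mul1r ler_nat.
have ge0 : 0 <= (absz n)%:R / (L%:R : R) by rewrite divr_ge0.
rewrite ler_norml; apply/andP; split; lra.
Qed.

Lemma tent_lipschitz L n k : (0 < L)%N ->
  `|tent L (n - k) - tent L n| <= (absz k)%:R / L%:R.
Proof.
move=> L_gt0; have Lpos : (0 : R) < L%:R by rewrite ltr0n.
set P := (absz (n - k))%:R / (L%:R : R); set Q := (absz n)%:R / (L%:R : R).
set K := (absz k)%:R / (L%:R : R).
have PQK : P <= Q + K.
  by rewrite /P /Q /K -mulrDl ler_pM2r ?invr_gt0 // -natrD ler_nat; lia.
have QPK : Q <= P + K.
  by rewrite /P /Q /K -mulrDl ler_pM2r ?invr_gt0 // -natrD ler_nat; lia.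
have inP : (`|n - k| <= L)%N = (P <= 1) by rewrite ler_pdivrMr // mul1r ler_nat.
have inQ : (`|n| <= L)%N = (Q <= 1) by rewrite ler_pdivrMr // mul1r ler_nat.
have [K0 P0 Q0] : [/\ 0 <= K, 0 <= P & 0 <= Q] by split; rewrite divr_ge0.
rewrite /tent -/P -/Q inP inQ.
by case: (leP P 1) => ?; case: (leP Q 1) => ?; rewrite ler_norml; apply/andP; split; lra.
Qed.

End Tent.

Section RealFacts.
Context {R : realType}.

Lemma le_of_forall_le_add_divn (x a b : R) : 0 <= b ->
  (forall L : nat, (0 < L)%N -> x <= a + b / L%:R) -> x <= a.
Proof.
move=> b0 xle; rewrite leNgt; apply/negP => ax.
have xa : 0 < x - a by rewrite subr_gt0.
set L := (Num.Def.archi_bound (b / (x - a))).+1.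
have Lpos : (0 : R) < L%:R by rewrite ltr0n.
have bL : b / (x - a) < L%:R.
  apply: lt_trans (archi_boundP (divr_ge0 b0 (ltW xa))) _.
  by rewrite ltr_nat ltnSn.
have : b / L%:R < x - a.
  by rewrite ltr_pdivrMr // mulrC -ltr_pdivrMr.
by have := xle L isT; lra.
Qed.

Lemma eq0_of_norm_le_small (x C d : R) : 0 < d ->
  (forall e, 0 < e -> e <= d -> `|x| <= C * e) -> x = 0.
Proof.
move=> d0 small; apply/eqP; apply: contraT => x0.
have xpos : 0 < `|x| by rewrite normr_gt0.
have C1 : 0 < `|C| + 1 by rewrite ltr_wpDl.
set e := Num.min d (`|x| / (2 * (`|C| + 1))).
have e0 : 0 < e by rewrite lt_min d0 divr_gt0 // mulr_gt0.
have ed : e <= d by rewrite ge_min lexx.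
have ex : e * (2 * (`|C| + 1)) <= `|x|.
  by rewrite -ler_pdivlMr ?mulr_gt0 // ge_min lexx orbT.
have Ce : C * e <= `|C| * e by apply: ler_wpM2r; [exact: ltW | exact: ler_norm].
suff : `|x| < `|x| by rewrite ltxx.
have := small e e0 ed; nra.
Qed.

Lemma continuous_cos_scale (r : R) : continuous (fun t : R => cos (r * t)).
Proof.
move=> t; apply: (continuous_comp (f := fun t => r * t) (g := @cos R)).
  by apply: continuousM; [exact: cst_continuous | exact: cvg_id].
exact: continuous_cos.
Qed.

Lemma continuous_cos_sum (s : seq int) (a : int -> R) :
  continuous (fun t : R => \sum_(k <- s) a k * cos (k%:~R * t)).
Proof.
apply: continuous_big => [|k _ t]; first exact: add_continuous.
by apply: continuousM; [exact: cst_continuous | exact: continuous_cos_scale].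
Qed.

Lemma continuous_near01_const (f : R -> R) (h : R) : continuous f -> h < 1/4 ->
  (forall t, `|f t| <= h \/ `|f t - 1| <= h) ->
  exists c : R, (c = 0 \/ c = 1) /\ forall t, 0 <= t -> `|f t - c| <= h.
Proof.
move=> f_cont h14 f01.
have no_cross t : 0 <= t -> f 0 <= 1/2 <= f t \/ f t <= 1/2 <= f 0 -> False.
  move=> t0 cross; have [c _ fc] : exists2 c, c \in `[0, t] & f c = 1/2.
    apply: IVT => //; first exact: continuous_subspaceT.
    by rewrite ge_min le_max; case: cross => /andP[-> ->]; rewrite orbT.
  by case: (f01 c); rewrite fc ler_norml => /andP[]; lra.
case: (f01 0) => f0; [exists 0 | exists 1]; (split; [by [left|right] |]);
  move=> t t0; rewrite ?subr0; case: (f01 t) => // ft; exfalso; apply: (no_cross t t0);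
  move: f0 ft; rewrite !ler_norml => /andP[? ?] /andP[? ?]; [left|right];
  apply/andP; split; lra.
Qed.

Definition root_angle (M j : nat) : R := j%:R * (pi *+ 2 / M%:R).

Lemma root_angle_ge0 M j : 0 <= root_angle M j.
Proof.
by rewrite mulr_ge0 ?divr_ge0 // mulrn_wge0 // ltW // pi_gt0.
Qed.

Lemma sum_cos_roots_unity (M : nat) (m : int) : (`|m| < M)%N ->
  \sum_(0 <= j < M) cos (m%:~R * root_angle M j) = if m == 0 then M%:R else 0.
Proof.
move=> mM; have Mpos : (0 : R) < M%:R by rewrite ltr0n; lia.
have M_neq0 : (M%:R : R) != 0 by rewrite gt_eqF.
case: eqP => [->|/eqP m0].
  by under eq_bigr do rewrite mul0r cos0; rewrite sumr_const_nat subn0.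
have cos_absz y : cos (m%:~R * y) = cos ((absz m)%:R * y).
  by case: m {mM m0} => n //; rewrite NegzE intrN mulNr cosN abszN.
under eq_bigr do rewrite cos_absz.
set p := absz m; have p_gt0 : (0 < p)%N by rewrite absz_gt0.
set x : R := p%:R * (pi *+ 2 / M%:R).
have sin_half_gt0 : 0 < sin (x / 2).
  have -> : x / 2 = pi * (p%:R / M%:R) by rewrite /x; field.
  have pM : 0 < p%:R / (M%:R : R) < 1.
    apply/andP; split; first by apply: divr_gt0; rewrite // ltr0n.
    by rewrite ltr_pdivrMr // mul1r ltr_nat.
  by apply: sin_gt0_pi; have := pi_gt0 R; nra.
have tele j : cos (p%:R * root_angle M j) * (2 * sin (x / 2)) =
    sin (j.+1%:R * x - x / 2) - sin (j%:R * x - x / 2).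
  have -> : j.+1%:R * x - x / 2 = j%:R * x + x / 2 by rewrite -natr1; field.
  have -> : p%:R * root_angle M j = j%:R * x by rewrite /root_angle /x; ring.
  by rewrite sinD sinB; ring.
have : (\sum_(0 <= j < M) cos (p%:R * root_angle M j)) * (2 * sin (x / 2)) = 0.
  rewrite mulr_suml (eq_bigr _ (fun j _ => tele j)) telescope_sumr //.
  have -> : M%:R * x - x / 2 = (0%:R * x - x / 2) + (pi *+ 2) *+ p.
    by rewrite -mulr_natl /x; field.
  by rewrite (periodicn (@sinD2pi R)) subrr.
by move/eqP; rewrite !mulf_eq0 (gt_eqF sin_half_gt0) pnatr_eq0 !orbF => /eqP.
Qed.

(* The hypotheses say that z := c + i s nearly satisfies z = z^2: they bound the
   real and imaginary parts of z - z^2. *)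
Lemma almost_idempotent_near01 (c s h : R) : 0 <= h -> h <= 1/64 ->
  `|c - c * c + s * s| <= h -> `|s - 2 * c * s| <= h ->
  `|s| <= 2 * h /\ (`|c| <= 4 * h \/ `|c - 1| <= 4 * h).
Proof.
move=> h0 h1; rewrite !ler_norml => /andP[re1 re2] /andP[im1 im2].
have s_small : -(2 * h) <= s <= 2 * h.
  case: (lerP c (1/4)) => c1; first by apply/andP; split; nra.
  case: (lerP (3/4) c) => c2; first by apply/andP; split; nra.
  exfalso; nra.
move: s_small => /andP[s1 s2]; split; first by apply/andP.
by case: (lerP c (1/2)) => c12; [left|right]; apply/andP; split; nra.
Qed.

Lemma idempotent_defect_le (c s X Y C d : R) :
  `|c| <= C -> `|s| <= C -> `|X - c| <= d -> `|Y + s| <= d ->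
  `|X - (c * X + s * Y)| <= C * d -> `|Y - (c * Y - s * X)| <= C * d ->
  `|c - c * c + s * s| <= (3 * C + 1) * d /\ `|s - 2 * c * s| <= (3 * C + 1) * d.
Proof.
move=> cC sC Xc Ys eqX eqY.
have cXc : `|c * (X - c)| <= C * d by rewrite normrM; apply: ler_pM.
have sYs : `|s * (Y + s)| <= C * d by rewrite normrM; apply: ler_pM.
have -> : (3 * C + 1) * d = d + C * d + C * d + C * d by ring.
have add4 (t1 t2 t3 t4 b1 b2 b3 b4 : R) : `|t1| <= b1 -> `|t2| <= b2 ->
    `|t3| <= b3 -> `|t4| <= b4 -> `|t1 + t2 + t3 + t4| <= b1 + b2 + b3 + b4.
  by move=> *; do 3 (apply: le_trans (ler_normD _ _) _; apply: lerD => //).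
split.
  have -> : c - c * c + s * s =
      - (X - c) + (X - (c * X + s * Y)) + c * (X - c) + s * (Y + s) by ring.
  by apply: add4; rewrite ?normrN.
have -> : s - 2 * c * s =
    (Y + s) - (Y - (c * Y - s * X)) - c * (Y + s) + s * (X - c) by ring.
apply: add4; rewrite ?normrN // normrM; apply: ler_pM => //.
Qed.

End RealFacts.

Section Sequences.
Context {R : realType}.
Implicit Types v w : int -> R.

Lemma linf0 : linf (fun _ : int => 0 : R).
Proof. by exists 0 => n; rewrite normr0. Qed.

Lemma linf_comb (a : R) v w : linf v -> linf w -> linf (fun n => a * v n + w n).
Proof.
move=> [M vM] [M' wM']; exists (`|a| * M + M') => n.
apply: le_trans (ler_normD _ _) _; rewrite normrM.
by apply: lerD => //; apply: ler_wpM2l.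
Qed.

Lemma linf_scale (a : R) v : linf v -> linf (fun n => a * v n).
Proof.
by move=> lv; have := linf_comb a lv linf0; congr linf; apply: funext => n; rewrite addr0.
Qed.

Definition dirac (j : int) : int -> R := fun n => (n == j)%:R.

Lemma linf_dirac j : linf (dirac j).
Proof. by exists 1 => n; rewrite /dirac; case: (n == j); rewrite ?normr1 ?normr0. Qed.

Lemma sum_dirac (s : seq int) (c : int -> R) n : uniq s ->
  \sum_(j <- s) c j * dirac j n = if n \in s then c n else 0.
Proof.
elim: s => [|x s IH] /=; first by rewrite big_nil.
move=> /andP[xs us]; rewrite big_cons IH // in_cons /dirac.
case: eqP => [->|_] /=; last by rewrite mulr0 add0r.
by rewrite (negbTE xs) mulr1 addr0.
Qed.

Lemma dirac_sub j n : dirac 0 (n - j) = dirac j n.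
Proof. by rewrite /dirac subr_eq0. Qed.

Lemma bshift_dirac j : bshift (dirac (j + 1)) = dirac j.
Proof. by apply: funext => n; rewrite /bshift /dirac (inj_eq (addIr 1)). Qed.

Lemma norm_tent_mul_le1 L (g : int -> R) m : (0 < L)%N -> (forall i, `|g i| <= 1) ->
  `|tent L m * g m| <= 1.
Proof.
by move=> L0 g1; rewrite normrM -[1]mul1r; apply: ler_pM => //; exact: norm_tent_le1.
Qed.

Lemma linf_tent_mul L (g : int -> R) : (0 < L)%N -> (forall i, `|g i| <= 1) ->
  linf (fun m => tent L m * g m).
Proof. by move=> L0 g1; exists 1 => m; exact: norm_tent_mul_le1. Qed.

Definition truncation (N : nat) v : int -> R :=
  fun m => if (`|m| <= N)%N then v m else 0.

Lemma linf_truncation N v : linf v -> linf (truncation N v).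
Proof.
move=> [M vM]; exists M => m; rewrite /truncation; case: ifP => // _.
by rewrite normr0; apply: le_trans (vM 0); exact: normr_ge0.
Qed.

Lemma truncation_notin_window N v m : m \notin window N -> truncation N v m = 0.
Proof. by rewrite mem_window /truncation => /negbTE ->. Qed.

Lemma c0_truncation_close v e : c0 v -> 0 < e ->
  exists N, forall m, `|v m - truncation N v m| <= e.
Proof.
move=> v_c0 e0; have [N vN] := v_c0 e e0; exists N => m; rewrite /truncation.
case: leqP => mN; first by rewrite subrr normr0 ltW.
by rewrite subr0; apply: vN; exact: ltnW.
Qed.

End Sequences.

Section ShiftInvariantOperator.
Variable R : realType.
Implicit Types v w : int -> R.
Variable Phi : (int -> R) -> (int -> R).
Variable C : R.
Hypothesis Phi_linf : forall v, linf v -> linf (Phi v).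
Hypothesis Phi_linear : forall (a : R) v w, linf v -> linf w ->
  Phi (fun n => a * v n + w n) = (fun n => a * Phi v n + Phi w n).
Hypothesis Phi_bounded : forall v M, (forall n, `|v n| <= M) ->
  forall n, `|Phi v n| <= C * M.

Lemma bound_ge0 : 0 <= C.
Proof.
have v0 (n : int) : `|(0 : R)| <= 1 by rewrite normr0.
by have := Phi_bounded v0 0; rewrite mulr1; apply: le_trans; exact: normr_ge0.
Qed.

Lemma Phi0 : Phi (fun _ => 0) = fun _ => 0.
Proof.
have := Phi_linear (-1) (@linf0 R) (@linf0 R).
have -> : (fun n : int => -1 * (0 : R) + 0) = fun _ => 0.
  by apply: funext => n; rewrite mulr0 addr0.
by move=> ->; apply: funext => n; rewrite mulN1r addNr.
Qed.

Lemma PhiZ (a : R) v : linf v -> Phi (fun n => a * v n) = fun n => a * Phi v n.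
Proof.
move=> lv; have := Phi_linear a lv (@linf0 R); rewrite Phi0.
have -> : (fun n => a * v n + 0) = (fun n => a * v n) by apply: funext => n; rewrite addr0.
by move=> ->; apply: funext => n; rewrite addr0.
Qed.

Lemma Phi_comb (a b : R) v w : linf v -> linf w ->
  Phi (fun n => a * v n + b * w n) = fun n => a * Phi v n + b * Phi w n.
Proof. by move=> lv lw; rewrite (Phi_linear a lv (linf_scale b lw)) PhiZ. Qed.

Lemma PhiB v w : linf v -> linf w -> Phi (fun n => v n - w n) = fun n => Phi v n - Phi w n.
Proof.
move=> lv lw; have := Phi_linear (-1) lw lv.
have -> : (fun n => -1 * w n + v n) = (fun n => v n - w n) by apply: funext => n; ring.
by move=> ->; apply: funext => n; ring.
Qed.

Lemma norm_PhiB_le v w M : linf v -> linf w -> (forall n, `|v n - w n| <= M) ->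
  forall n, `|Phi v n - Phi w n| <= C * M.
Proof. by move=> lv lw vw n; have := Phi_bounded vw n; rewrite PhiB. Qed.

Lemma Phi_sum_dirac (s : seq int) (c : int -> R) :
  Phi (fun n => \sum_(j <- s) c j * dirac j n) =
  fun n => \sum_(j <- s) c j * Phi (dirac j) n.
Proof.
have linf_sum (s' : seq int) : linf (fun n => \sum_(j <- s') c j * dirac j n).
  elim: s' => [|x s' IH]; first by exists 0 => n; rewrite big_nil normr0.
  have := linf_comb (c x) (linf_dirac x) IH.
  by congr linf; apply: funext => n; rewrite big_cons.
elim: s => [|x s IH].
  under [X in Phi X]funext do rewrite big_nil.
  by rewrite Phi0; apply: funext => n; rewrite big_nil.
under [X in Phi X]funext do rewrite big_cons.
rewrite (Phi_linear _ (linf_dirac x) (linf_sum s)) IH.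
by apply: funext => n; rewrite big_cons.
Qed.

Lemma Phi_finite_support (s : seq int) v : uniq s -> (forall n, n \notin s -> v n = 0) ->
  forall n, Phi v n = \sum_(j <- s) v j * Phi (dirac j) n.
Proof.
move=> us vs n; have v_sum : v = (fun n => \sum_(j <- s) v j * dirac j n).
  by apply: funext => m; rewrite sum_dirac //; case: ifP => // /negbT /vs.
by rewrite {1}v_sum Phi_sum_dirac.
Qed.

Hypothesis Phi_shift : commutes_with_B Phi.

(* In the notation of the paper, phi^ac (v) = \sum_k impulse k * v (- k). *)
Definition impulse : int -> R := Phi (dirac 0).

Lemma Phi_dirac j n : Phi (dirac j) n = impulse (n - j).
Proof.
have step i m : Phi (dirac i) m = Phi (dirac (i + 1)) (m + 1).
  by rewrite -{1}bshift_dirac Phi_shift //; exact: linf_dirac.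
elim/int_ind: j n => [|k IH|k IH] n; first by rewrite subr0.
  rewrite intS (addrC 1); have := step k (n - 1); rewrite subrK IH => <-.
  by congr impulse; ring.
rewrite step; have -> : - (k.+1)%:Z + 1 = - k%:Z by rewrite intS; ring.
by rewrite IH; congr impulse; rewrite intS; ring.
Qed.

Lemma sum_norm_impulse_le (s : seq int) : uniq s -> \sum_(k <- s) `|impulse k| <= C.
Proof.
move=> us; set s' := [seq - k | k <- s].
have us' : uniq s' by rewrite map_inj_uniq //; exact: oppr_inj.
pose v n : R := if n \in s' then Num.sg (impulse (- n)) else 0.
have v1 n : `|v n| <= 1.
  by rewrite /v; case: ifP => _; rewrite ?normr0 // normr_sg; case: (_ != 0).
have := Phi_bounded v1 0; rewrite mulr1 (Phi_finite_support us'); last first.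
  by move=> n /negbTE; rewrite /v => ->.
rewrite big_map (eq_big_seq (fun k => `|impulse k|)); last first.
  by move=> k ks; rewrite Phi_dirac /v map_f // opprK add0r -normrEsg.
by apply: le_trans; exact: ler_norm.
Qed.

Definition impulse_tail_le (N : nat) (e : R) := forall s : seq int, uniq s ->
  (forall k, k \in s -> (N < `|k|)%N) -> \sum_(k <- s) `|impulse k| <= e.

Lemma impulse_tail_small e : 0 < e -> exists N, impulse_tail_le N e.
Proof.
pose sums := [set x : R | exists2 s : seq int,
                 uniq s & x = \sum_(k <- s) `|impulse k|]%classic.
have sums_sup : has_sup sums.
  split; first by exists 0; exists [::]; rewrite ?big_nil.
  by exists C => x [s us ->]; exact: sum_norm_impulse_le.
move=> e0; have [_ [s0 us0 ->] near_sup] := sup_adherent e0 sums_sup.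
exists (\max_(k <- s0) `|k|%N) => s us s_big.
have us_s0 : uniq (s ++ s0).
  rewrite cat_uniq us us0 andbT; apply/hasPn => k ks0; apply/negP => ks.
  move: (s_big k ks); rewrite ltnNge => /negP; apply.
  exact: (@leq_bigmax_seq _ _ xpredT (fun k : int => `|k|%N)).
have : \sum_(k <- s ++ s0) `|impulse k| <= sup sums.
  by apply: sup_upper_bound => //; exists (s ++ s0).
by rewrite big_cat /=; move: near_sup; lra.
Qed.

Lemma Phi_near_convolution N e L v : impulse_tail_le N e ->
  (forall m, m \notin window L -> v m = 0) -> (forall m, `|v m| <= 1) ->
  forall n, `|Phi v n - \sum_(k <- window N) impulse k * v (n - k)| <= e.
Proof.
move=> tail v_supp v1 n.
pose F k := impulse k * v (n - k).
pose S := [seq n - j | j <- window L]; pose T := [seq k <- S | (N < `|k|)%N].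
have uS : uniq S by rewrite map_inj_uniq ?window_uniq // => x y /addrI /oppr_inj.
have PhiS : Phi v n = \sum_(k <- S) F k.
  rewrite (Phi_finite_support (window_uniq L) v_supp) /S [RHS]big_map.
  by apply: eq_bigr => j _; rewrite Phi_dirac /F mulrC (_ : n - (n - j) = j) //; ring.
have splitS : \sum_(k <- S) F k = \sum_(k <- window N ++ T) F k.
  apply: big_uniq_eq_supp => //.
    rewrite cat_uniq window_uniq filter_uniq // andbT /=; apply/hasPn => k.
    by rewrite mem_filter mem_window -ltnNge => /andP[].
  move=> k; rewrite /F mulf_eq0 negb_or => /andP[_ vk].
  have kS : k \in S.
    apply/mapP; exists (n - k); last by ring.
    by apply: contraR vk => /v_supp ->; rewrite eqxx.
  by rewrite mem_cat mem_filter kS andbT mem_window leqNgt orNb.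
rewrite PhiS splitS big_cat /= addrAC subrr add0r.
apply: le_trans (ler_norm_sum _ _ _) (le_trans _ (tail T (filter_uniq _ uS) _)).
  by apply: ler_sum => k _; rewrite /F normrM -[X in _ <= X]mulr1 ler_wpM2l.
by move=> k; rewrite mem_filter => /andP[].
Qed.

Lemma Phi_tent_mul_near N e L (g : int -> R) : impulse_tail_le N e -> (0 < L)%N ->
  (forall m, `|g m| <= 1) ->
  forall n, `|Phi (fun m => tent L m * g m) n
              - \sum_(k <- window N) impulse k * (tent L n * g (n - k))|
            <= e + C * (N%:R / L%:R).
Proof.
move=> tail L0 g1 n; have Lpos : (0 : R) < L%:R by rewrite ltr0n.
pose v m := tent L m * g m.
have v_supp m : m \notin window L -> v m = 0.
  by rewrite /v => /tent_notin_window ->; rewrite mul0r.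
have v1 m : `|v m| <= 1 by exact: norm_tent_mul_le1.
apply: le_trans (ler_distD (\sum_(k <- window N) impulse k * v (n - k)) _ _) _.
apply: lerD; first exact: Phi_near_convolution tail v_supp v1 n.
rewrite -sumrB (eq_bigr (fun k => impulse k * ((tent L (n - k) - tent L n) * g (n - k))));
  last by move=> k _; rewrite /v; ring.
apply: le_trans (ler_norm_sum _ _ _) _.
apply: le_trans (_ : \sum_(k <- window N) `|impulse k| * (N%:R / L%:R) <= _); last first.
  rewrite -mulr_suml; apply: ler_wpM2r; first by rewrite divr_ge0.
  exact: sum_norm_impulse_le (window_uniq N).
rewrite big_seq [X in _ <= X]big_seq; apply: ler_sum => k kN.
rewrite normrM; apply: ler_wpM2l => //; rewrite normrM -[X in _ <= X]mulr1.
apply: ler_pM => //; apply: le_trans (tent_lipschitz _ _ L0) _.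
by rewrite ler_pM2r ?invr_gt0 // ler_nat -mem_window.
Qed.

Definition fourier_cos (N : nat) (t : R) :=
  \sum_(k <- window N) impulse k * cos (k%:~R * t).
Definition fourier_sin (N : nat) (t : R) :=
  \sum_(k <- window N) impulse k * sin (k%:~R * t).

Lemma norm_impulse_sum_le N (g : int -> R) : (forall k, `|g k| <= 1) ->
  `|\sum_(k <- window N) impulse k * g k| <= C.
Proof.
move=> g1; apply: le_trans (ler_norm_sum _ _ _) _.
apply: le_trans (sum_norm_impulse_le (window_uniq N)); apply: ler_sum => k _.
by rewrite normrM -[X in _ <= X]mulr1; apply: ler_wpM2l.
Qed.

Lemma convolution_cos N (w t : R) n :
  \sum_(k <- window N) impulse k * (w * cos ((n - k)%:~R * t)) =
  fourier_cos N t * (w * cos (n%:~R * t)) + fourier_sin N t * (w * sin (n%:~R * t)).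
Proof.
rewrite /fourier_cos /fourier_sin !mulr_suml -big_split; apply: eq_bigr => k _.
by rewrite intrB mulrBl cosB /=; ring.
Qed.

Lemma convolution_sin N (w t : R) n :
  \sum_(k <- window N) impulse k * (w * sin ((n - k)%:~R * t)) =
  fourier_cos N t * (w * sin (n%:~R * t)) + (- fourier_sin N t) * (w * cos (n%:~R * t)).
Proof.
rewrite mulNr /fourier_cos /fourier_sin !mulr_suml -sumrB; apply: eq_bigr => k _.
by rewrite intrB mulrBl sinB /=; ring.
Qed.

Lemma Phi_c0_scale c : (forall k, impulse k = c * dirac 0 k) ->
  forall v, linf v -> c0 v -> Phi v = (fun n => c * v n).
Proof.
move=> imp v lv v_c0; apply: funext => n; apply/eqP; rewrite -subr_eq0; apply/eqP.
apply: (@eq0_of_norm_le_small _ _ (C + `|c|) 1 ltr01) => e e0 _.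
have [N vN] := c0_truncation_close v_c0 e0.
have PhiN : Phi (truncation N v) n = c * truncation N v n.
  rewrite (Phi_finite_support (window_uniq N) (@truncation_notin_window R N v)).
  under eq_bigr do rewrite Phi_dirac imp dirac_sub mulrCA.
  rewrite -mulr_sumr sum_dirac ?window_uniq //.
  by case: ifP => // /negbT /truncation_notin_window ->.
have := norm_PhiB_le lv (linf_truncation N lv) vN n; rewrite PhiN => PhiN_le.
rewrite (_ : _ - _ = Phi v n - c * truncation N v n - c * (v n - truncation N v n));
  last by ring.
apply: le_trans (ler_normB _ _) _; rewrite mulrDl lerD // normrM.
by apply: ler_wpM2l.
Qed.

Hypothesis Phi_idem : idempotent_map Phi.

Lemma fourier_idempotent_defect N e L t : impulse_tail_le N e -> (0 < L)%N ->
  let c := fourier_cos N t in let s := fourier_sin N t in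
  `|c - c * c + s * s| <= (3 * C + 1) * (e + C * (N%:R / L%:R)) /\
  `|s - 2 * c * s| <= (3 * C + 1) * (e + C * (N%:R / L%:R)).
Proof.
move=> tail L0 c s; set d := e + C * _.
have cos1 m : `|cos (m%:~R * t)| <= 1 by rewrite ler_norml cos_le1 cos_geN1.
have sin1 m : `|sin (m%:~R * t)| <= 1 by rewrite ler_norml sin_le1 sin_geN1.
pose vc m := tent L m * cos (m%:~R * t); pose vs m := tent L m * sin (m%:~R * t).
have lc : linf vc by exact: linf_tent_mul.
have ls : linf vs by exact: linf_tent_mul.
have Phi_vc n : `|Phi vc n - (c * vc n + s * vs n)| <= d.
  by rewrite /vc /vs -convolution_cos; exact: Phi_tent_mul_near.
have Phi_vs n : `|Phi vs n - (c * vs n + (- s) * vc n)| <= d.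
  by rewrite /vc /vs -convolution_sin; exact: Phi_tent_mul_near.
(* At 0, where vc = 1 and vs = 0, Phi vc and Phi vs are close to c and - s; idempotence
   compares Phi (Phi vc) with Phi applied to the approximation c vc + s vs of Phi vc. *)
have vc0 : vc 0 = 1 by rewrite /vc tent0 mul0r cos0 mulr1.
have vs0 : vs 0 = 0 by rewrite /vs tent0 mul0r sin0 mulr0.
apply: (@idempotent_defect_le _ c s (Phi vc 0) (Phi vs 0)).
- exact: norm_impulse_sum_le.
- exact: norm_impulse_sum_le.
- by have := Phi_vc 0; rewrite vc0 vs0 mulr1 mulr0 addr0.
- by have := Phi_vs 0; rewrite vc0 vs0 mulr1 mulr0 add0r opprK.
- have := norm_PhiB_le (Phi_linf lc) (linf_comb c lc (linf_scale s ls)) Phi_vc 0.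
  by rewrite Phi_idem // Phi_comb.
- have := norm_PhiB_le (Phi_linf ls) (linf_comb c ls (linf_scale (- s) lc)) Phi_vs 0.
  by rewrite Phi_idem // Phi_comb // mulNr.
Qed.

Lemma fourier_near01 h : 0 < h -> h <= 1/64 -> exists N, impulse_tail_le N h /\
  forall t, `|fourier_sin N t| <= 2 * h /\
            (`|fourier_cos N t| <= 4 * h \/ `|fourier_cos N t - 1| <= 4 * h).
Proof.
move=> h0 h1; have C0 := bound_ge0.
set K := 3 * C + 1; have Kpos : 0 < K by rewrite /K; lra.
have [N tail] := impulse_tail_small (divr_gt0 h0 Kpos).
exists N; split.
  move=> s us s_big; apply: le_trans (tail s us s_big) _.
  by rewrite ler_pdivrMr // /K; nra.
have d_eq L : (0 < L)%N -> K * (h / K + C * (N%:R / L%:R)) = h + K * C * N%:R / L%:R.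
  by move=> L0; field; rewrite pnatr_eq0 -lt0n L0 gt_eqF.
have KCN : 0 <= K * C * N%:R by rewrite !mulr_ge0 // ltW.
move=> t; apply: almost_idempotent_near01 (ltW h0) h1 _ _;
  apply: (le_of_forall_le_add_divn KCN) => L L0; rewrite -(d_eq L L0);
  by have [] := fourier_idempotent_defect t tail L0.
Qed.

Lemma fourier_inversion N k : (`|k| <= N)%N ->
  let M := (2 * N + 1)%N in
  \sum_(0 <= j < M) (fourier_cos N (root_angle M j) * cos (k%:~R * root_angle M j)
                    + fourier_sin N (root_angle M j) * sin (k%:~R * root_angle M j))
  = impulse k * M%:R.
Proof.
move=> kN M.
transitivity (\sum_(0 <= j < M) \sum_(n <- window N)
                impulse n * cos ((n - k)%:~R * root_angle M j)).
  apply: eq_bigr => j _; rewrite /fourier_cos /fourier_sin !mulr_suml -big_split.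
  by apply: eq_bigr => n _; rewrite intrB mulrBl cosB /=; ring.
rewrite exchange_big /=.
transitivity (\sum_(n <- window N) impulse n * M%:R * dirac n k).
  apply: eq_big_seq => n nN; rewrite -mulr_sumr sum_cos_roots_unity; last first.
    by move: nN; rewrite mem_window /M; lia.
  rewrite /dirac subr_eq0 eq_sym.
  by case: (k == n); rewrite /= ?mulr1n ?mulr0n ?mulr1 ?mulr0.
by rewrite sum_dirac ?window_uniq // mem_window kN.
Qed.

Lemma fourier_inversion_sub N k c : (`|k| <= N)%N ->
  let M := (2 * N + 1)%N in
  (impulse k - c * dirac 0 k) * M%:R =
  \sum_(0 <= j < M) ((fourier_cos N (root_angle M j) - c) * cos (k%:~R * root_angle M j)
                    + fourier_sin N (root_angle M j) * sin (k%:~R * root_angle M j)).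
Proof.
move=> kN M.
have dirac_sum : dirac 0 k * M%:R = \sum_(0 <= j < M) cos (k%:~R * root_angle M j) :> R.
  rewrite sum_cos_roots_unity /dirac; last by rewrite /M; lia.
  by case: (k == 0); rewrite /= ?mulr1n ?mulr0n ?mul1r ?mul0r.
rewrite mulrBl -mulrA dirac_sum -(fourier_inversion kN) mulr_sumr -sumrB.
by apply: eq_bigr => j _; ring.
Qed.

Lemma impulse_near_dirac h : 0 < h -> h <= 1/64 ->
  exists c : R, (c = 0 \/ c = 1) /\ forall k, `|impulse k - c * dirac 0 k| <= 6 * h.
Proof.
move=> h0 h1; have [N [tail near01]] := fourier_near01 h0 h1.
have h14 : 4 * h < 1/4 by lra.
have [c [c01 c_near]] := continuous_near01_const
  (@continuous_cos_sum R (window N) impulse) h14 (fun t => (near01 t).2).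
exists c; split => // k; case: (leqP `|k| N) => kN; last first.
  have k0 : k != 0 by apply: contraTneq kN => ->.
  rewrite /dirac (negbTE k0) mulr0 subr0; apply: le_trans (_ : h <= _); last lra.
  by have := tail [:: k] isT; rewrite big_seq1; apply => j; rewrite inE => /eqP ->.
set M := (2 * N + 1)%N; have Mpos : (0 : R) < M%:R by rewrite ltr0n /M addn1.
suff : `|(impulse k - c * dirac 0 k) * M%:R| <= M%:R * (6 * h).
  by rewrite normrM (ger0_norm (ltW Mpos)) mulrC ler_pM2l.
rewrite (fourier_inversion_sub c kN).
apply: le_trans (ler_norm_sum _ _ _) _.
apply: le_trans (_ : \sum_(0 <= j < M) 6 * h <= _); last first.
  by rewrite sumr_const_nat subn0 (mulr_natl (6 * h)).
apply: ler_sum => j _; have x0 := root_angle_ge0 M j; set x := root_angle M j in x0 *.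
apply: le_trans (ler_normD _ _) _; rewrite (_ : 6 * h = 4 * h * 1 + 2 * h * 1); last by ring.
apply: lerD; rewrite normrM; apply: ler_pM => //.
- by rewrite /fourier_cos; exact: c_near.
- by rewrite ler_norml cos_le1 cos_geN1.
- exact: (near01 _).1.
- by rewrite ler_norml sin_le1 sin_geN1.
Qed.

Lemma impulse_dirac_multiple :
  exists c : R, (c = 0 \/ c = 1) /\ forall k, impulse k = c * dirac 0 k.
Proof.
have h0 : 0 < 1/64 :> R by lra.
have [c [c01 c_near]] := impulse_near_dirac h0 (lexx _).
exists c; split => // k; apply/eqP; rewrite -subr_eq0; apply/eqP.
apply: (@eq0_of_norm_le_small _ _ 6 _ h0) => h h_gt0 h_le.
have [c' [c'01 c'_near]] := impulse_near_dirac h_gt0 h_le.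
suff -> : c = c' by exact: c'_near.
have := c_near 0; have := c'_near 0; rewrite /dirac eqxx /= mulr1n mulr1 !ler_norml.
by case: c01 => ->; case: c'01 => -> /andP[? ?] /andP[? ?]; lra.
Qed.

End ShiftInvariantOperator.

Unset Implicit Arguments.

Theorem theorem2p3 (R : realType) (Phi : (int -> R) -> (int -> R)) :
  linf_bounded_map Phi -> commutes_with_B Phi -> idempotent_map Phi ->
  singular_map Phi \/
  exists Psi : (int -> R) -> (int -> R),
    [/\ linf_linear_map Psi, singular_map Psi, idempotent_map Psi,
        commutes_with_B Psi &
        forall v, linf v -> Phi v = (fun n => v n - Psi v n)].
Proof.
move=> [[Phi_linf Phi_linear] [C Phi_bounded]] Phi_shift Phi_idem.
have [c [c01 impulse_c]] :=
  impulse_dirac_multiple Phi_linf Phi_linear Phi_bounded Phi_shift Phi_idem.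
have Phi_c0 := Phi_c0_scale Phi_linear Phi_bounded Phi_shift impulse_c.
case: c01 => c_val; [left | right].
  by move=> v lv v_c0; rewrite Phi_c0 // c_val; apply: funext => n; rewrite mul0r.
exists (fun v n => v n - Phi v n); split.
- split=> [v lv | a v w lv lw]; last by rewrite Phi_linear //; apply: funext => n; ring.
  by have := linf_comb (-1) (Phi_linf _ lv) lv; congr linf; apply: funext => n; ring.
- by move=> v lv v_c0; rewrite Phi_c0 // c_val; apply: funext => n; rewrite mul1r subrr.
- move=> v lv; rewrite (PhiB Phi_linear lv (Phi_linf _ lv)) Phi_idem //.
  by apply: funext => n; ring.
- by move=> v lv; rewrite Phi_shift.
- by move=> v lv; apply: funext => n; ring.
Qed.
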